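(* Let $G$ be a cyclic union of cliques $G_1,\dots,G_m$. Then $G$ is not a stable motif (for any CTLN $W(G,\varepsilon,\delta)$ with legal parameters).
   Context: A clique is a graph in which every pair of nodes is bidirectionally connected. A cyclic union of $G_1,\dots,G_m$ is the graph on the disjoint union of their vertex sets, keeping all edges within each $G_i$, adding all edges from every node of $G_i$ to every node of $G_{i+1}$ (indices mod $m$), and no other edges. Legal parameters: $\delta>0$, $0<\varepsilon<\frac{\delta}{\delta+1}$. For a graph $H$ on $[h]$, $W=W(H,\varepsilon,\delta)$ has $W_{ii}=0$, $W_{ij}=-1+\varepsilon$ if $j\to i$, $W_{ij}=-1-\delta$ if $i\ne j$, $j\not\to i$; dynamics $\dot x_i=-x_i+[\sum_jW_{ij}x_j+\theta]_+$, $\theta>0$; assumed nondegenerate. $H$ is a stable motif if $\theta(I-W)^{-1}1$ has all entries positive and all eigenvalues of $I-W$ have positive real part. *)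

From HB Require Import structures.
From mathcomp Require Import all_boot all_order all_algebra.
From mathcomp Require Import complex.
Set Implicit Arguments. Unset Strict Implicit. Unset Printing Implicit Defensive.
Import Order.TTheory GRing.Theory Num.Theory.
Local Open Scope ring_scope.

(* A directed graph on [h] = 'I_h : G j i  means the edge  j -> i. *)

(* The vertices of the graph are
   labelled 'I_h and [part v] is the index of the clique containing v
   (part must be surjective so that every clique is nonempty).
   j -> i (for j <> i) iff j, i lie in the same clique, or the clique of i
   is the (cyclic) successor of the clique of j. *)
Definition cyclic_union_cliques (h m : nat) (part : 'I_h -> 'I_m) : rel 'I_h :=
  fun j i => (j != i) && ((part i == part j) || (part i == ordS (part j))).

Definition legal_params (R : realFieldType) (eps delta : R) : Prop :=
  0 < delta /\ 0 < eps /\ eps < delta / (delta + 1).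

Definition ctln_W (R : pzRingType) (h : nat) (G : rel 'I_h) (eps delta : R)
  : 'M[R]_h :=
  \matrix_(i, j) (if i == j then 0
                  else if G j i then -1 + eps else -1 - delta).

(* We also require
   I - W to be invertible so that (I - W)^{-1} is meaningful (this is implied
   by the eigenvalue condition anyway). *)
Definition stable_motif (R : rcfType) (h : nat) (G : rel 'I_h)
  (eps delta theta : R) : Prop :=
  let A := 1%:M - ctln_W G eps delta in
  [/\ A \in unitmx,
      (forall i, 0 < (theta *: (invmx A *m (const_mx 1 : 'cV[R]_h))) i 0)
    & (forall z : R[i], eigenvalue (map_mx (fun x => x%:C%C) A) z ->
                        0 < complex.Re z)].

(* Lifting a left eigenvector of the m x m quotient matrix N of I - W over the
   cliques (it is constant on each clique) shows that every eigenvalue of N is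
   one of I - W.  If all of them had positive real part, then
   tr(N^2) = sum Re(lam^2) <= sum (Re lam)^2 <= (sum Re lam)^2 = (tr N)^2.
   But tr(N^2) - (tr N)^2 = sum_{k <> l} (N_kl N_lk - N_kk N_ll), and for a
   cyclic union of m >= 3 cliques every summand is positive: the edges between
   two distinct cliques go in at most one direction, so
   N_kl N_lk >= n_k n_l (1 - eps)(1 + delta) > N_kk N_ll, the last inequality
   being where eps < delta / (delta + 1) is used. *)

From HB Require Import structures.
From mathcomp Require Import all_boot all_order all_algebra.
From mathcomp Require Import complex.
From mathcomp Require Import mxred spectral.
From mathcomp Require Import zify ring lra.
Set Implicit Arguments. Unset Strict Implicit. Unset Printing Implicit Defensive.
Import Order.TTheory GRing.Theory Num.Theory.
Local Open Scope ring_scope.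

Lemma mxtrace_mulmx_sub_sqr (R : comPzRingType) n (M : 'M[R]_n) :
  \tr (M *m M) - \tr M ^+ 2 = \sum_k \sum_l (M k l * M l k - M k k * M l l).
Proof.
rewrite expr2 /mxtrace mulr_suml -sumrB; apply: eq_bigr => k _.
by rewrite mxE mulr_sumr -sumrB.
Qed.

Lemma sqr_mxtrace_lt (R : realDomainType) n (M : 'M[R]_n) : (1 < n)%N ->
  (forall k l, k != l -> M k k * M l l < M k l * M l k) ->
  \tr M ^+ 2 < \tr (M *m M).
Proof.
move=> n_gt1 M_lt; rewrite -subr_gt0 mxtrace_mulmx_sub_sqr.
pose t k l := M k l * M l k - M k k * M l l.
have t_ge0 k l : 0 <= t k l.
  by have [->|/M_lt] := eqVneq k l; rewrite /t ?subrr // subr_ge0 => /ltW.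
pose k0 : 'I_n := Ordinal (ltnW n_gt1); pose l0 : 'I_n := Ordinal n_gt1.
have t0_gt0 : 0 < t k0 l0 by rewrite subr_gt0 M_lt.
change (0 < \sum_k \sum_l t k l); rewrite (bigD1 k0) //= (bigD1 l0) //= -addrA.
by rewrite ltr_wpDr // addr_ge0 // !sumr_ge0 // => *; rewrite sumr_ge0.
Qed.

Section EquitablePartition.
Variables (h m : nat) (part : 'I_h -> 'I_m).

Definition cell_size (k : 'I_m) : nat := #|[pred i | part i == k]|.

Lemma sum_cells (V : nmodType) (F : 'I_m -> V) :
  \sum_i F (part i) = \sum_k F k *+ cell_size k.
Proof.
rewrite (partition_big part predT) //=; apply: eq_bigr => k _.
rewrite (eq_bigr (fun _ => F k)) => [|i /eqP -> //].
by rewrite sumr_const; congr (_ *+ _); apply: eq_card => i; rewrite !inE.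
Qed.

Definition block_const_mx (R : pzRingType) (f : 'I_m -> 'I_m -> R) (c : R)
  : 'M[R]_h := \matrix_(i, j) (f (part i) (part j) + (i == j)%:R * c).

Definition quotient_mx (R : pzRingType) (f : 'I_m -> 'I_m -> R) (c : R)
  : 'M[R]_m := \matrix_(k, l) ((cell_size k)%:R * f k l + (k == l)%:R * c).

Lemma map_block_const_mx (R S : pzRingType) (g : {rmorphism R -> S}) f c :
  map_mx g (block_const_mx f c) = block_const_mx (fun k l => g (f k l)) (g c).
Proof. by apply/matrixP => i j; rewrite !mxE rmorphD rmorphM rmorph_nat. Qed.

Lemma map_quotient_mx (R S : pzRingType) (g : {rmorphism R -> S}) f c :
  map_mx g (quotient_mx f c) = quotient_mx (fun k l => g (f k l)) (g c).
Proof. by apply/matrixP => k l; rewrite !mxE !(rmorphD, rmorphM, rmorph_nat). Qed.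

Hypothesis part_surj : forall k, exists i, part i = k.

Lemma eigenvalue_quotient_mx (F : fieldType) (f : 'I_m -> 'I_m -> F) c z :
  eigenvalue (quotient_mx f c) z -> eigenvalue (block_const_mx f c) z.
Proof.
case/eigenvalueP=> w wN w_neq0; apply/eigenvalueP.
exists (\row_i w 0 (part i)); last first.
  apply: contra w_neq0 => /eqP v0; apply/eqP/rowP => k.
  by have [i <-] := part_surj k; move/rowP: v0 => /(_ i); rewrite !mxE.
apply/rowP => j; move/rowP: wN => /(_ (part j)); rewrite !mxE => <-.
under eq_bigr do rewrite !mxE mulrDr.
under [RHS]eq_bigr do rewrite !mxE mulrDr.
rewrite !big_split /= (sum_cells (fun k => w 0 k * f k (part j))).
congr (_ + _); first by apply: eq_bigr => k _; rewrite mulr_natl mulrnAr.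
have off_diag0 (T : finType) (a : T) (g : T -> F) :
  \sum_(x | x != a) g x * ((x == a)%:R * c) = 0.
  by rewrite big1 // => x /negbTE ->; rewrite mul0r mulr0.
by rewrite (bigD1 j) // (bigD1 (part j)) //= !eqxx !off_diag0.
Qed.

End EquitablePartition.

Lemma mxtrace_sqr_trig (R : pzRingType) n (T : 'M[R]_n) : is_trig_mx T ->
  \tr (T *m T) = \sum_k T k k ^+ 2.
Proof.
move=> /is_trig_mxP Ttrig; apply: eq_bigr => k _.
rewrite mxE (bigD1 k) //= big1 ?addr0 // => j /negbTE jk.
have [kj|jk'|/val_inj ekj] := ltngtP k j.
- by rewrite Ttrig ?mul0r.
- by rewrite (Ttrig j k) ?mulr0.
- by rewrite ekj eqxx in jk.
Qed.

Lemma mxtrace_conjmx (F : fieldType) n (V A : 'M[F]_n) :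
  V \in unitmx -> \tr (conjmx V A) = \tr A.
Proof. by move=> Vu; rewrite conjumx // mxtrace_mulC mulmxA mulVmx // mul1mx. Qed.

Lemma mxtrace_eigenvalues (C : numClosedFieldType) n (A : 'M[C]_n) :
  exists lam : 'I_n -> C, [/\ forall k, eigenvalue A (lam k),
    \tr A = \sum_k lam k & \tr (A *m A) = \sum_k lam k ^+ 2].
Proof.
case: n A => [|n] A.
  by exists (fun=> 0); split; [case | rewrite /mxtrace !big_ord0..].
have [P /unitarymx_unit Pu Ttrig] := Schur A (ltn0Sn n).
have PA := stablemx_unit A Pu.
exists (fun k => conjmx P A k k); split.
- move=> k; apply: (eigenvalue_conjmx PA); first by rewrite row_free_unit.
  rewrite -topredE /= eigenvalue_root_char char_poly_trig // /root horner_prod.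
  by apply/prodf_eq0; exists k => //; rewrite hornerXsubC subrr.
- by rewrite -(mxtrace_conjmx A Pu).
- by rewrite -(mxtrace_conjmx (A *m A) Pu) conjmxM ?inE // mxtrace_sqr_trig.
Qed.

Lemma Re_sum (R : rcfType) (I : finType) (F : I -> R[i]) :
  complex.Re (\sum_i F i) = \sum_i complex.Re (F i).
Proof. by apply: big_morph => // -[? ?] [? ?]. Qed.

Lemma Re_sqr_le (R : rcfType) (z : R[i]) :
  complex.Re (z ^+ 2) <= complex.Re z ^+ 2.
Proof. by case: z => a b; rewrite !expr2 /= lerBlDr lerDl -expr2 sqr_ge0. Qed.

Lemma sum_sqr_le_sqr_sum (R : realDomainType) (I : finType) (a : I -> R) :
  (forall k, 0 <= a k) -> \sum_k a k ^+ 2 <= (\sum_k a k) ^+ 2.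
Proof.
move=> a_ge0; rewrite [leRHS]expr2 mulr_suml; apply: ler_sum => k _.
by rewrite expr2 ler_wpM2l // (bigD1 k) //= lerDl sumr_ge0.
Qed.

Lemma mxtrace_sqr_le (R : rcfType) n (A : 'M[R]_n) :
  (forall z, eigenvalue (map_mx (real_complex R) A) z -> 0 <= complex.Re z) ->
  \tr (A *m A) <= \tr A ^+ 2.
Proof.
move=> Re_ge0.
have [lam [eig_lam trA trA2]] := mxtrace_eigenvalues (map_mx (real_complex R) A).
have ReC (x : R) : complex.Re x%:C%C = x by [].
rewrite -[\tr A]ReC -[\tr (A *m A)]ReC -!trace_map_mx map_mxM trA trA2 !Re_sum.
apply: le_trans (sum_sqr_le_sqr_sum (fun k => Re_ge0 _ (eig_lam k))).
by apply: ler_sum => k _; apply: Re_sqr_le.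
Qed.

Lemma ordS_ordS_neq m (l : 'I_m) : (2 < m)%N -> ordS (ordS l) != l.
Proof.
move=> m_gt2; apply/eqP => /(congr1 val) /=; have := ltn_ord l.
case: (ltngtP l.+1 m) => [lt1|//|eq1] _; last first.
  by rewrite eq1 modnn modn_small //; lia.
rewrite (modn_small lt1); have [lt2|ge2] := ltnP l.+2 m.
  by rewrite modn_small //; lia.
by rewrite (_ : l.+2 = m) ?modnn //; lia.
Qed.

Lemma ctln_diag_mul_lt (R : realFieldType) (eps delta x y : R) :
  0 < eps -> 0 < delta -> eps * (delta + 1) < delta -> 1 <= x -> 1 <= y ->
  (x * (1 - eps) + eps) * (y * (1 - eps) + eps)
  < x * y * ((1 - eps) * (1 + delta)).
Proof.
move=> eps_gt0 delta_gt0 eps_delta x_ge1 y_ge1; rewrite -subr_gt0.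
have -> : x * y * ((1 - eps) * (1 + delta))
          - (x * (1 - eps) + eps) * (y * (1 - eps) + eps)
  = (1 - eps) * (eps * ((x - 1) * (y - 1)) + delta * (x * y - 1))
    + (delta - eps * (delta + 1)) by ring.
have eps_lt1 : eps < 1 by nra.
have xy_ge1 : 1 <= x * y by rewrite mulr_ege1.
apply: ltr_wpDl; last by rewrite subr_gt0.
apply: mulr_ge0; first by rewrite subr_ge0 ltW.
have xy_ge0 : 0 <= (x - 1) * (y - 1) by rewrite mulr_ge0 // subr_ge0.
by rewrite addr_ge0 // mulr_ge0 ?(ltW eps_gt0) ?(ltW delta_gt0) // subr_ge0.
Qed.

Section CyclicUnionOfCliques.
Variables (R : realFieldType) (h m : nat) (part : 'I_h -> 'I_m) (eps delta : R).

Definition cyclic_union_block (k l : 'I_m) : R :=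
  if (k == l) || (k == ordS l) then 1 - eps else 1 + delta.

Lemma I_sub_ctln_W_cyclic_union :
  1%:M - ctln_W (cyclic_union_cliques part) eps delta
  = block_const_mx part cyclic_union_block eps.
Proof.
apply/matrixP => i j; rewrite !mxE /cyclic_union_block /cyclic_union_cliques.
have [->|_] := eqVneq i j; first by rewrite !eqxx /=; ring.
by rewrite /=; case: ifP => _; ring.
Qed.

Hypotheses (m_gt2 : (2 < m)%N) (part_surj : forall k, exists i, part i = k).

Lemma cell_size_ge1 k : 1 <= (cell_size part k)%:R :> R.
Proof.
rewrite ler1n; apply/card_gt0P; have [i <-] := part_surj k.
by exists i; rewrite inE.
Qed.

Lemma cyclic_union_block_mul_ge k l : 0 < eps -> 0 < delta -> k != l ->
  (1 - eps) * (1 + delta) <= cyclic_union_block k l * cyclic_union_block l k.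
Proof.
move=> eps_gt0 delta_gt0 kl; have lk : l != k by rewrite eq_sym.
rewrite /cyclic_union_block (negbTE kl) (negbTE lk) /=.
have : ~~ ((k == ordS l) && (l == ordS k)).
  apply/negP => /andP[/eqP kSl /eqP lSk].
  by move: (ordS_ordS_neq l m_gt2); rewrite -kSl -lSk eqxx.
case: (k == ordS l); case: (l == ordS k) => //= _; first by rewrite mulrC.
by apply: ler_wpM2r; lra.
Qed.

Lemma sqr_mxtrace_cyclic_union_quotient_lt :
  0 < eps -> 0 < delta -> eps * (delta + 1) < delta ->
  let N := quotient_mx part cyclic_union_block eps in \tr N ^+ 2 < \tr (N *m N).
Proof.
move=> eps_gt0 delta_gt0 eps_delta; apply: sqr_mxtrace_lt; first lia.
move=> k l kl; have lk : l != k by rewrite eq_sym.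
rewrite !mxE !eqxx (negbTE kl) (negbTE lk) !mul1r !mul0r !addr0.
have block_diag j : cyclic_union_block j j = 1 - eps.
  by rewrite /cyclic_union_block eqxx.
rewrite !block_diag.
apply: lt_le_trans (ctln_diag_mul_lt eps_gt0 delta_gt0 eps_delta
  (cell_size_ge1 k) (cell_size_ge1 l)) _.
rewrite [leRHS]mulrACA; apply: ler_wpM2l.
  by rewrite mulr_ge0 ?(le_trans ler01) ?cell_size_ge1.
exact: cyclic_union_block_mul_ge.
Qed.

End CyclicUnionOfCliques.

Theorem corollary4 (R : rcfType) (h m : nat) (part : 'I_h -> 'I_m)
  (eps delta theta : R) :
  (3 <= m)%N ->
  (forall k : 'I_m, exists v : 'I_h, part v = k) ->
  legal_params eps delta -> 0 < theta ->
  ~ stable_motif (cyclic_union_cliques part) eps delta theta.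
Proof.
move=> m_gt2 part_surj [delta_gt0 [eps_gt0 eps_lt]] _ [_ _ Re_gt0].
have eps_delta : eps * (delta + 1) < delta by rewrite -ltr_pdivlMr // addr_gt0.
have /= := sqr_mxtrace_cyclic_union_quotient_lt m_gt2 part_surj
  eps_gt0 delta_gt0 eps_delta.
rewrite ltNge => /negP; apply; apply: mxtrace_sqr_le => z.
rewrite map_quotient_mx => /(eigenvalue_quotient_mx part_surj).
by rewrite -map_block_const_mx -I_sub_ctln_W_cyclic_union => /Re_gt0 /ltW.
Qed.
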